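(* For all loop-free hybrid programs $A,B$ and every set of variables $H$: if $FV(A)\cup FV(B)\subseteq H$ and $A\equiv_H B$, then $A^*\equiv_H B^*$.
   Context: Hybrid programs and their transition semantics $[\![\cdot]\!]$ are as in differential dynamic logic ($x:=\theta$, $x:=*$, $?\phi$, $x'=\theta\,\&\,Q$, $;$, $\cup$, $^*$); a program is loop-free if it contains no $^*$. $FV(\alpha)$ is the standard $d\mathcal{L}$ set of free variables of $\alpha$ (variables whose initial value may be read by $\alpha$). States $\sigma,\sigma'$ satisfy $\sigma\approx_H\sigma'$ iff they agree on every variable in $H$. For loop-free programs, $\alpha\equiv_H\beta$ iff for all states $\sigma_0,\sigma_1$ with $(\sigma_0,\sigma_1)\in[\![\alpha]\!]$ there exist $\sigma'_0,\sigma'_1$ with $(\sigma'_0,\sigma'_1)\in[\![\beta]\!]$, $\sigma_0\approx_H\sigma'_0$ and $\sigma_1\approx_H\sigma'_1$, and symmetrically with $\alpha,\beta$ exchanged. For loops (lock-step equivalence), $\alpha^*\equiv_H\beta^*$ iff for every $n\in\mathbb{N}$ and all states $\sigma_0,\dots,\sigma_n$ with $(\sigma_i,\sigma_{i+1})\in[\![\alpha]\!]$ for all $i<n$, there exist states $\sigma'_0,\dots,\sigma'_n$ with $(\sigma'_j,\sigma'_{j+1})\in[\![\beta]\!]$ for all $j<n$ and $\sigma_k\approx_H\sigma'_k$ for all $k\le n$; and symmetrically with $\alpha,\beta$ exchanged. *)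

From Stdlib Require Import Reals Relations Arith.
Open Scope R_scope.

Definition var := nat.
Definition state := var -> R.

Definition upd (s : state) (x : var) (v : R) : state :=
  fun y => if Nat.eqb y x then v else s y.

Inductive term : Type :=
| TVar : var -> term
| TConst : R -> term
| TNeg : term -> term
| TPlus : term -> term -> term
| TMult : term -> term -> term.

Inductive fml : Type :=
| FTrue : fml
| FFalse : fml
| FLe : term -> term -> fml
| FLt : term -> term -> fml
| FEq : term -> term -> fml
| FNot : fml -> fml
| FAnd : fml -> fml -> fml
| FOr : fml -> fml -> fml
| FImp : fml -> fml -> fml
| FForall : var -> fml -> fml
| FExists : var -> fml -> fml.

Inductive prog : Type :=
| PAssign : var -> term -> prog
| PAssignAny : var -> prog
| PTest : fml -> prog
| PODE : var -> term -> fml -> prog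
| PSeq : prog -> prog -> prog
| PChoice : prog -> prog -> prog
| PStar : prog -> prog.

Fixpoint eval (s : state) (t : term) : R :=
  match t with
  | TVar x => s x
  | TConst c => c
  | TNeg t1 => - eval s t1
  | TPlus t1 t2 => eval s t1 + eval s t2
  | TMult t1 t2 => eval s t1 * eval s t2
  end.

Fixpoint sat (s : state) (f : fml) : Prop :=
  match f with
  | FTrue => True
  | FFalse => False
  | FLe a b => eval s a <= eval s b
  | FLt a b => eval s a < eval s b
  | FEq a b => eval s a = eval s b
  | FNot g => ~ sat s g
  | FAnd g h => sat s g /\ sat s h
  | FOr g h => sat s g \/ sat s h
  | FImp g h => sat s g -> sat s h
  | FForall x g => forall v : R, sat (upd s x v) g
  | FExists x g => exists v : R, sat (upd s x v) g
  end.

(** Transition semantics of x' = θ & Q: there is a duration r >= 0 and a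
    solution φ (given on all of R, only its behaviour on [0,r] matters; it is
    required to be differentiable at every t in [0,r], which is equivalent to
    one-sided differentiability at the endpoints of [0,r] after extension)
    starting in ω, ending in ν, staying in Q, and keeping all other variables
    constant. *)
Definition ode_sem (x : var) (th : term) (Q : fml) (w v : state) : Prop :=
  exists (r : R) (phi : R -> state),
    0 <= r /\ phi 0 = w /\ phi r = v /\
    (forall t, 0 <= t <= r ->
       sat (phi t) Q /\
       (forall y, y <> x -> phi t y = w y) /\
       derivable_pt_lim (fun s => phi s x) t (eval (phi t) th)).

Fixpoint sem (a : prog) : state -> state -> Prop :=
  match a with
  | PAssign x th => fun w v => v = upd w x (eval w th)
  | PAssignAny x => fun w v => exists c : R, v = upd w x c
  | PTest f => fun w v => v = w /\ sat w f
  | PODE x th Q => ode_sem x th Q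
  | PSeq a1 a2 => fun w v => exists m, sem a1 w m /\ sem a2 m v
  | PChoice a1 a2 => fun w v => sem a1 w v \/ sem a2 w v
  | PStar a1 => clos_refl_trans state (sem a1)
  end.

Definition vset := var -> Prop.

Fixpoint FVt (t : term) : vset :=
  match t with
  | TVar x => fun y => y = x
  | TConst _ => fun _ => False
  | TNeg t1 => FVt t1
  | TPlus t1 t2 | TMult t1 t2 => fun y => FVt t1 y \/ FVt t2 y
  end.

Fixpoint FVf (f : fml) : vset :=
  match f with
  | FTrue | FFalse => fun _ => False
  | FLe a b | FLt a b | FEq a b => fun y => FVt a y \/ FVt b y
  | FNot g => FVf g
  | FAnd g h | FOr g h | FImp g h => fun y => FVf g y \/ FVf h y
  | FForall x g | FExists x g => fun y => FVf g y /\ y <> x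
  end.

(** Must-bound variables (written on every run). *)
Fixpoint MBV (a : prog) : vset :=
  match a with
  | PAssign x _ | PAssignAny x => fun y => y = x
  | PTest _ => fun _ => False
  | PODE x _ _ => fun y => y = x
  | PSeq a1 a2 => fun y => MBV a1 y \/ MBV a2 y
  | PChoice a1 a2 => fun y => MBV a1 y /\ MBV a2 y
  | PStar _ => fun _ => False
  end.

Fixpoint FV (a : prog) : vset :=
  match a with
  | PAssign _ th => FVt th
  | PAssignAny _ => fun _ => False
  | PTest f => FVf f
  | PODE x th Q => fun y => y = x \/ FVt th y \/ FVf Q y
  | PSeq a1 a2 => fun y => FV a1 y \/ (FV a2 y /\ ~ MBV a1 y)
  | PChoice a1 a2 => fun y => FV a1 y \/ FV a2 y
  | PStar a1 => FV a1
  end.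

Fixpoint loop_free (a : prog) : Prop :=
  match a with
  | PAssign _ _ | PAssignAny _ | PTest _ | PODE _ _ _ => True
  | PSeq a1 a2 | PChoice a1 a2 => loop_free a1 /\ loop_free a2
  | PStar _ => False
  end.

Definition agree (H : vset) (s s' : state) : Prop :=
  forall y, H y -> s y = s' y.

Definition sim_H (H : vset) (a b : prog) : Prop :=
  forall s0 s1, sem a s0 s1 ->
    exists s0' s1', sem b s0' s1' /\ agree H s0 s0' /\ agree H s1 s1'.

Definition equiv_H (H : vset) (a b : prog) : Prop :=
  sim_H H a b /\ sim_H H b a.

(** One direction of lock-step equivalence α^* ≡_H β^*; sequences
    σ_0..σ_n are represented by functions nat -> state (only indices <= n
    matter). *)
Definition lockstep_sim_H (H : vset) (a b : prog) : Prop :=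
  forall (n : nat) (sg : nat -> state),
    (forall i, (i < n)%nat -> sem a (sg i) (sg (S i))) ->
    exists sg' : nat -> state,
      (forall j, (j < n)%nat -> sem b (sg' j) (sg' (S j))) /\
      (forall k, (k <= n)%nat -> agree H (sg k) (sg' k)).

(** α^* ≡_H β^* (stated in terms of the loop bodies α, β). *)
Definition star_equiv_H (H : vset) (a b : prog) : Prop :=
  lockstep_sim_H H a b /\ lockstep_sim_H H b a.

(** Idea: a loop-free program only reads its free variables, so a run of B
    from a state s0 can be "transplanted" to any state u0 agreeing with s0 on
    a superset V of FV(B); the transplanted run ends in a state agreeing with
    the original final state on V and on the variables B must write.

    Given a run σ_0 … σ_n of A^*, we build the simulating run of B^* by
    induction on n: H-equivalence yields a B-step (s0, s1) H-agreeing with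
    (σ_n, σ_{n+1}), and since FV(B) ⊆ H the coincidence lemma moves it to
    start at the already constructed σ'_n ([lockstep_extend]).  Hence one
    direction of H-equivalence gives one direction of lock-step equivalence
    ([lockstep_of_sim]), and the theorem follows by symmetry. *)

From Stdlib Require Import Reals Relations Arith Classical FunctionalExtensionality Lia Lra.

Lemma eval_coincidence (th : term) (s s' : state) :
  (forall y, FVt th y -> s y = s' y) -> eval s th = eval s' th.
Proof.
  induction th; simpl; intros Hagree; try reflexivity.
  - apply Hagree; reflexivity.
  - rewrite IHth; auto.
  - rewrite IHth1, IHth2; auto.
  - rewrite IHth1, IHth2; auto.
Qed.

Lemma upd_agree (s s' : state) (x : var) (c : R) (P : var -> Prop) :
  (forall y, P y /\ y <> x -> s y = s' y) ->
  forall y, P y -> upd s x c y = upd s' x c y.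
Proof.
  intros Hagree y Hy; unfold upd.
  destruct (Nat.eqb_spec y x); auto.
Qed.

Lemma sat_coincidence (f : fml) : forall (s s' : state),
  (forall y, FVf f y -> s y = s' y) -> (sat s f <-> sat s' f).
Proof.
  induction f; simpl; intros s s' Hagree;
    try (rewrite (eval_coincidence t s s'), (eval_coincidence t0 s s'); auto; tauto);
    try tauto.
  - rewrite (IHf s s'); tauto.
  - rewrite (IHf1 s s'), (IHf2 s s'); auto; tauto.
  - rewrite (IHf1 s s'), (IHf2 s s'); auto; tauto.
  - rewrite (IHf1 s s'), (IHf2 s s'); auto; tauto.
  - split; intros Hall c; specialize (Hall c);
      [rewrite <- (IHf (upd s v c) (upd s' v c)) | rewrite (IHf (upd s v c) (upd s' v c))];
      auto; apply upd_agree; auto.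
  - split; intros [c Hc]; exists c;
      [rewrite <- (IHf (upd s v c) (upd s' v c)) | rewrite (IHf (upd s v c) (upd s' v c))];
      auto; apply upd_agree; auto.
Qed.

Lemma upd_same (s : state) (x : var) : upd s x (s x) = s.
Proof.
  apply functional_extensionality; intro y; unfold upd.
  destruct (Nat.eqb_spec y x); subst; auto.
Qed.

(** Coincidence for x' = θ & Q: a solution from s is transplanted to u by
    keeping u constant off x and copying the x-coordinate of the solution;
    it still satisfies Q and the differential equation because these only
    read variables of FV(x' = θ & Q), on which the two flows agree. *)
Lemma ode_coincidence (x : var) (th : term) (Q : fml) (V : vset) (s u s' : state) :
  (forall y, FV (PODE x th Q) y -> V y) -> agree V s u ->
  ode_sem x th Q s s' ->
  exists u', ode_sem x th Q u u' /\ agree (fun y => V y \/ y = x) s' u'.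
Proof.
  intros HV Hagree (r & phi & Hr & Hphi0 & Hphir & Hflow).
  assert (Hux : u x = s x) by (symmetry; apply Hagree, HV; simpl; auto).
  set (psi := fun tm => upd u x (phi tm x)).
  assert (Hpsi_x : (fun tm => psi tm x) = (fun tm => phi tm x)).
  { apply functional_extensionality; intro tm; unfold psi, upd; rewrite Nat.eqb_refl; auto. }
  assert (Hpsi_phi : forall tm, 0 <= tm <= r ->
            forall y, FV (PODE x th Q) y -> phi tm y = psi tm y).
  { intros tm Ht y Hy; unfold psi, upd.
    destruct (Nat.eqb_spec y x) as [->|]; [reflexivity|].
    destruct (Hflow tm Ht) as (_ & Hconst & _).
    rewrite Hconst by auto. apply Hagree, HV, Hy. }
  exists (psi r); split.
  - exists r, psi; split; [exact Hr|]; split; [|split; [reflexivity|]].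
    { unfold psi; rewrite Hphi0, <- Hux; apply upd_same. }
    intros tm Htm; destruct (Hflow tm Htm) as (HQ & _ & Hderiv); split; [|split].
    + apply (sat_coincidence Q (phi tm)); auto.
      intros y Hy; apply Hpsi_phi; simpl; auto.
    + intros y Hy; unfold psi, upd.
      destruct (Nat.eqb_spec y x); congruence.
    + rewrite Hpsi_x, <- (eval_coincidence th (phi tm)); auto.
      intros y Hy; apply Hpsi_phi; simpl; auto.
  - intros y Hy; subst s'; unfold psi, upd.
    destruct (Nat.eqb_spec y x) as [->|]; auto.
    destruct Hy as [Hy|Hy]; [|contradiction].
    destruct (Hflow r) as (_ & Hconst & _); [lra|].
    rewrite Hconst by auto. apply Hagree, Hy.
Qed.

Lemma prog_coincidence (a : prog) : loop_free a ->
  forall (V : vset) (s u s' : state),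
  (forall y, FV a y -> V y) -> agree V s u -> sem a s s' ->
  exists u', sem a u u' /\ agree (fun y => V y \/ MBV a y) s' u'.
Proof.
  induction a; simpl; intros Hlf V s u s' HV Hagree Hrun.
  - subst s'; exists (upd u v (eval u t)); split; [reflexivity|].
    intros y Hy; unfold upd; destruct (Nat.eqb_spec y v).
    + apply eval_coincidence; intros z Hz; apply Hagree, HV, Hz.
    + destruct Hy as [Hy|Hy]; [apply Hagree, Hy | contradiction].
  - destruct Hrun as [c ->]; exists (upd u v c); split; [eauto|].
    intros y Hy; unfold upd; destruct (Nat.eqb_spec y v); auto.
    destruct Hy as [Hy|Hy]; [apply Hagree, Hy | contradiction].
  - destruct Hrun as [-> Hsat]; exists u; split.
    + split; auto. apply (sat_coincidence f s u); auto.
    + intros y [Hy|[]]; auto.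
  - exact (ode_coincidence v t f V s u s' HV Hagree Hrun).
  - destruct Hlf as [Hlf1 Hlf2], Hrun as [m [Hrun1 Hrun2]].
    destruct (IHa1 Hlf1 V s u m) as [mu [Hmu Hagree_m]]; auto.
    (* after a1, the states agree on V and on everything a1 must write,
       which covers all variables a2 reads *)
    assert (HV2 : forall y, FV a2 y -> V y \/ MBV a1 y).
    { intros y Hy; destruct (classic (MBV a1 y)); auto. }
    destruct (IHa2 Hlf2 (fun y => V y \/ MBV a1 y) m mu s') as [u' [Hrun' Hagree']]; auto.
    exists u'; split; [eauto|]. intros y Hy; apply Hagree'; tauto.
  - destruct Hlf as [Hlf1 Hlf2], Hrun as [Hrun|Hrun].
    + destruct (IHa1 Hlf1 V s u s') as [u' [Hrun' Hagree']]; auto.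
      exists u'; split; auto. intros y Hy; apply Hagree'; tauto.
    + destruct (IHa2 Hlf2 V s u s') as [u' [Hrun' Hagree']]; auto.
      exists u'; split; auto. intros y Hy; apply Hagree'; tauto.
  - contradiction.
Qed.

Lemma lockstep_extend (H : vset) (A B : prog) : loop_free B ->
  (forall y, FV B y -> H y) -> sim_H H A B ->
  forall s s' t : state, sem A s t -> agree H s s' ->
  exists t', sem B s' t' /\ agree H t t'.
Proof.
  intros HlfB HFV Hsim s s' t Hstep Hagree.
  destruct (Hsim s t Hstep) as (b0 & b1 & Hb & Hagree0 & Hagree1).
  destruct (prog_coincidence B HlfB H b0 s' b1) as [t' [Ht' Hagree_t]]; auto.
  { intros y Hy; rewrite <- Hagree0 by auto; apply Hagree; auto. }
  exists t'; split; auto.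
  intros y Hy; rewrite Hagree1 by auto; apply Hagree_t; auto.
Qed.

Lemma lockstep_of_sim (H : vset) (A B : prog) : loop_free B ->
  (forall y, FV B y -> H y) -> sim_H H A B -> lockstep_sim_H H A B.
Proof.
  intros HlfB HFV Hsim n; induction n as [|n IH]; intros sg Hsteps.
  - exists sg; split; [intros; lia|]. intros k _ y _; reflexivity.
  - destruct (IH sg) as [sg' [Hrun Hagree]]; [intros; apply Hsteps; lia|].
    destruct (lockstep_extend H A B HlfB HFV Hsim (sg n) (sg' n) (sg (S n)))
      as [t' [Ht' Hagree_t]]; auto.
    exists (fun k => if Nat.leb k n then sg' k else t'); split.
    + intros j Hj; destruct (Nat.leb_spec j n); [|lia].
      destruct (Nat.leb_spec (S j) n); [apply Hrun; lia|].
      replace j with n by lia; exact Ht'.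
    + intros k Hk; destruct (Nat.leb_spec k n); auto.
      replace k with (S n) by lia; exact Hagree_t.
Qed.

Theorem theorem2 (A B : prog) (H : vset) :
  loop_free A -> loop_free B ->
  (forall y, FV A y \/ FV B y -> H y) ->
  equiv_H H A B ->
  star_equiv_H H A B.
Proof.
  intros HlfA HlfB HFV [HsimAB HsimBA]; split; apply lockstep_of_sim; auto.
Qed.
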